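(* Let $c<d$ be positive integers and let $X_{c,d}\subset\mathbb{P}^5$ be the threefold defined over $\overline{\mathbb{Q}}$ by $$x_0^c+x_1^c+x_2^c-x_3^c-x_4^c-x_5^c=0,\qquad x_0^d+x_1^d+x_2^d-x_3^d-x_4^d-x_5^d=0.$$ Then the singular locus of $X_{c,d}$ is finite. More precisely, if $[\xi_0,\dots,\xi_5]$ is a singular point of $X_{c,d}$ and $\xi_i,\xi_j$ are two non-zero coordinates, then $\xi_i^{2(d-c)}=\xi_j^{2(d-c)}$. *)

From HB Require Import structures.
From mathcomp Require Import all_boot all_order all_algebra all_field.
From mathcomp Require Import mpoly.
Set Implicit Arguments. Unset Strict Implicit. Unset Printing Implicit Defensive.
Import Order.TTheory GRing.Theory Num.Theory.
Local Open Scope ring_scope.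

Definition sgn6 (i : 'I_6) : algC := if (i < 3)%N then 1 else -1.

Definition Fpoly (e : nat) : {mpoly algC[6]} :=
  \sum_(i < 6) sgn6 i *: ('X_i ^+ e).

Definition eqns (c d : nat) (k : 'I_2) : {mpoly algC[6]} :=
  if k == 0 then Fpoly c else Fpoly d.

Definition onX (c d : nat) (x : 'I_6 -> algC) : Prop :=
  (exists i, x i != 0) /\ forall k : 'I_2, (eqns c d k).@[x] = 0.

Definition jacobian (c d : nat) (x : 'I_6 -> algC) : 'M[algC]_(2, 6) :=
  \matrix_(k < 2, j < 6) ((mderiv j (eqns c d k)).@[x]).

(* x represents a singular point of the complete intersection X_{c,d}
   (Jacobian criterion: the Jacobian has rank < codimension 2) *)
Definition singular_pt (c d : nat) (x : 'I_6 -> algC) : Prop :=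
  onX c d x /\ (\rank (jacobian c d x) < 2)%N.

From mathcomp Require Import all_boot all_order all_algebra all_field.
From mathcomp Require Import mpoly.
From mathcomp Require Import ring zify.
Set Implicit Arguments.
Unset Strict Implicit.
Unset Printing Implicit Defensive.
Import GRing.Theory Num.Theory.
Local Open Scope ring_scope.

(* At a singular point the two rows (c e_j x_j^(c-1))_j and (d e_j x_j^(d-1))_j
   of the Jacobian are proportional, so every 2x2 minor vanishes; for two nonzero
   coordinates this says x_i^(d-c) = x_j^(d-c). Dividing by one nonzero coordinate,
   every other coordinate becomes 0 or a (d-c)-th root of unity, which leaves
   finitely many projective points. *)

Lemma mderivXn (R : nzRingType) n (i j : 'I_n) e :
  ('X_i ^+ e : {mpoly R[n]})^`M(j) = if i == j then e%:R *: 'X_i ^+ e.-1 else 0.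
Proof.
rewrite !mpolyXn mderivX mulmnE mnm1E.
have [<-|/negbTE ne] := eqVneq i j; last by rewrite mul0n scale0r.
rewrite mul1n; congr (_ *: 'X_[_]); apply/mnmP => k.
by rewrite mnmBE !mulmnE mnm1E; case: (i == k) => /=; lia.
Qed.

Lemma mderiv_Fpoly e j : (Fpoly e)^`M(j) = (sgn6 j * e%:R) *: 'X_j ^+ e.-1.
Proof.
rewrite /Fpoly (big_morph _ (@mderivD _ _ j) (@mderiv0 _ _ j)).
under eq_bigr do rewrite mderivZ mderivXn.
rewrite (bigD1 j) //= eqxx big1 ?addr0 ?scalerA // => k /negbTE->.
by rewrite scaler0.
Qed.

Lemma jacobianE c d x (k : 'I_2) j : jacobian c d x k j =
  sgn6 j * (if k == 0 then c else d)%:R * x j ^+ (if k == 0 then c else d).-1.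
Proof.
by rewrite mxE /eqns; case: ifP => _; rewrite mderiv_Fpoly mevalZ rmorphXn /= mevalXU.
Qed.

Lemma lift0_1 : lift 0 0 = 1 :> 'I_2.
Proof. exact: val_inj. Qed.

Lemma rank_lt2_minor (F : fieldType) n (A : 'M[F]_(2, n)) : (\rank A < 2)%N ->
  forall i j, A 0 i * A 1 j = A 0 j * A 1 i.
Proof.
move=> rkA i j; have : kermx A != 0.
  by rewrite -mxrank_eq0 mxrank_ker subn_eq0 -ltnNge.
case/rowV0Pn=> v /sub_kermxP vA0 v_neq0.
have vA k : v 0 0 * A 0 k = - (v 0 1 * A 1 k).
  apply/eqP; rewrite -addr_eq0; apply/eqP.
  rewrite -lift0_1.
  by have /matrixP/(_ 0 k) := vA0; rewrite !mxE !big_ord_recl big_ord0 addr0.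
apply/eqP; rewrite -subr_eq0; apply: contraNT v_neq0 => minor_neq0.
have v0 : v 0 0 = 0.
  apply: (mulIf minor_neq0); rewrite mul0r.
  have -> : v 0 0 * (A 0 i * A 1 j - A 0 j * A 1 i) =
            (v 0 0 * A 0 i) * A 1 j - (v 0 0 * A 0 j) * A 1 i by ring.
  by rewrite !vA; ring.
have v1 : v 0 1 = 0.
  apply: (mulIf minor_neq0); rewrite mul0r.
  have vA' k : v 0 1 * A 1 k = - (v 0 0 * A 0 k) by rewrite vA opprK.
  have -> : v 0 1 * (A 0 i * A 1 j - A 0 j * A 1 i) =
            A 0 i * (v 0 1 * A 1 j) - A 0 j * (v 0 1 * A 1 i) by ring.
  by rewrite !vA'; ring.
apply/eqP/matrixP => r l; rewrite !mxE (ord1 r).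
by case: (unliftP 0 l) => [l' ->|->]; rewrite ?(ord1 l') ?lift0_1.
Qed.

Lemma sgn6_neq0 j : sgn6 j != 0.
Proof. by rewrite /sgn6; case: ifP => _; rewrite ?oppr_eq0 oner_eq0. Qed.

Lemma singular_pt_expr_eq c d x : (0 < c)%N -> (c < d)%N -> singular_pt c d x ->
  forall i j, x i != 0 -> x j != 0 -> x i ^+ (d - c) = x j ^+ (d - c).
Proof.
move=> c_gt0 lt_cd [_ rk] i j xi_neq0 xj_neq0.
have := rank_lt2_minor rk i j; rewrite !jacobianE /=.
have d_pred : d.-1 = (c.-1 + (d - c))%N by lia.
set a := sgn6 i * sgn6 j * (c%:R * d%:R) * (x i ^+ c.-1 * x j ^+ c.-1).
have a_neq0 : a != 0.
  rewrite !mulf_neq0 ?sgn6_neq0 ?expf_neq0 // pnatr_eq0 -lt0n //.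
  exact: ltn_trans lt_cd.
rewrite d_pred !exprD; move/eqP; rewrite -subr_eq0 => /eqP minorE.
have : a * (x j ^+ (d - c) - x i ^+ (d - c)) = 0 by rewrite -minorE /a; ring.
by move/eqP; rewrite mulf_eq0 (negbTE a_neq0) subr_eq0 => /eqP ->.
Qed.

Lemma root_ratio_lines (F : fieldType) n m (z : F) : m.-primitive_root z ->
  exists (N : nat) (P : 'I_N -> 'I_n -> F), forall (x : 'I_n -> F) i0, x i0 != 0 ->
    (forall j, x j != 0 -> x j ^+ m = x i0 ^+ m) ->
    exists (k : 'I_N) (l : F), forall j, x j = l * P k j.
Proof.
move=> z_prim; exists #|{ffun 'I_n -> option 'I_m}|.
(* a line is indexed by the exponent of [z] (or [None] for 0) in each coordinate *)
exists (fun k j =>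
  if (enum_val k : {ffun 'I_n -> option 'I_m}) j is Some e then z ^+ e else 0).
move=> x i0 xi0_neq0 x_root.
pose exponent j := if x j == 0 then None else [pick e : 'I_m | x j == x i0 * z ^+ e].
exists (enum_rank [ffun j => exponent j]), (x i0) => j.
rewrite enum_rankK ffunE /exponent.
have [->|xj_neq0] := eqVneq (x j) 0; first by rewrite mulr0.
have ratio_root : (x j / x i0) ^+ m = 1.
  by rewrite expr_div_n x_root // divff // expf_neq0.
have [e ratioE] := prim_rootP z_prim ratio_root.
case: pickP => [e' /eqP // | /(_ e)].
by rewrite -ratioE mulrC divfK // eqxx.
Qed.

Theorem mainTheorem4 (c d : nat) (hc : (0 < c)%N) (hcd : (c < d)%N) :
  (exists (n : nat) (P : 'I_n -> 'I_6 -> algC),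
      forall x, singular_pt c d x ->
        exists (k : 'I_n) (l : algC), forall i, x i = l * P k i)
  /\
  (forall x, singular_pt c d x ->
     forall i j : 'I_6, x i != 0 -> x j != 0 ->
       x i ^+ (2 * (d - c)) = x j ^+ (2 * (d - c))).
Proof.
split=> [|x x_sing i j xi_neq0 xj_neq0]; last first.
  by rewrite mulnC !exprM (singular_pt_expr_eq hc hcd x_sing xi_neq0 xj_neq0).
have [z z_prim] := @C_prim_root_exists (d - c) ltac:(by rewrite subn_gt0).
have [N [P P_lines]] := root_ratio_lines 6 z_prim.
exists N, P => x x_sing; have [[i0 xi0_neq0] _] := x_sing.1.
apply: (P_lines _ _ xi0_neq0) => j xj_neq0.
exact: (singular_pt_expr_eq hc hcd x_sing xj_neq0 xi0_neq0).
Qed.
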